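(* For every positive integer $r$ there is a ReLU network with two input units, all of whose weights lie in $\{\frac12,-\frac12\}$, implementing a function $\times':\mathbb{R}^2\to\mathbb{R}$ such that: (i) $\times'(x,y)=0$ whenever $x=0$ or $y=0$; (ii) $|\times'(x,y)-xy|\le 6\cdot 2^{-2(r+1)}$ for all $x,y\in[-1,1]$; (iii) the depth is $\mathcal{O}(r)$; (iv) the width is bounded by a constant independent of $r$; (v) the number of weights is $\mathcal{O}(r)$.
   Context: A ReLU network is a feedforward network with activation $\sigma(x)=\max(0,x)$ in which each unit connects only to units in the next layer; depth is the number of layers and width the maximum number of units in a layer. *)

From HB Require Import structures.
From mathcomp Require Import all_boot all_order all_algebra.
From mathcomp Require Import reals.
Set Implicit Arguments. Unset Strict Implicit. Unset Printing Implicit Defensive.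
Import Order.TTheory GRing.Theory Num.Theory.
Local Open Scope ring_scope.

(* A zero entry of a weight
   matrix / bias vector means that the connection / bias is absent. *)
Inductive relu_net (R : realType) : nat -> nat -> Type :=
| Out : forall n m, 'M[R]_(m, n) -> 'cV[R]_m -> relu_net R n m
| Hidden : forall n k m, 'M[R]_(k, n) -> 'cV[R]_k -> relu_net R k m ->
    relu_net R n m.

Definition relu (R : realType) (x : R) : R := Num.max 0 x.

Fixpoint net_eval (R : realType) n m (N : relu_net R n m) : 'cV[R]_n -> 'cV[R]_m :=
  match N in relu_net _ n m return 'cV[R]_n -> 'cV[R]_m with
  | Out _ _ W b => fun x => W *m x + b
  | Hidden _ _ _ W b N' => fun x => net_eval N' (map_mx (@relu R) (W *m x + b))
  end.

(* depth = number of layers (input layer, hidden layers, output layer) *)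
Fixpoint net_depth (R : realType) n m (N : relu_net R n m) : nat :=
  match N with
  | Out _ _ _ _ => 2
  | Hidden _ _ _ _ _ N' => (net_depth N').+1
  end.

Fixpoint net_width (R : realType) n m (N : relu_net R n m) : nat :=
  match N with
  | Out n m _ _ => maxn n m
  | Hidden n _ _ _ _ N' => maxn n (net_width N')
  end.

Definition mx_nnz (R : realType) p q (A : 'M[R]_(p, q)) : nat :=
  #|[set ij : 'I_p * 'I_q | A ij.1 ij.2 != 0]|.

Fixpoint net_nweights (R : realType) n m (N : relu_net R n m) : nat :=
  match N with
  | Out _ _ W b => mx_nnz W + mx_nnz b
  | Hidden _ _ _ W b N' => mx_nnz W + mx_nnz b + net_nweights N'
  end.

Definition mx_all (R : realType) p q (P : R -> Prop) (A : 'M[R]_(p, q)) : Prop :=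
  forall i j, P (A i j).

Definition half_weight (R : realType) (w : R) : Prop :=
  w = 0 \/ w = 2^-1 \/ w = - 2^-1.

Fixpoint net_weights_in (R : realType) (P : R -> Prop) n m (N : relu_net R n m) : Prop :=
  match N with
  | Out _ _ W b => mx_all P W /\ mx_all P b
  | Hidden _ _ _ W b N' => [/\ mx_all P W, mx_all P b & net_weights_in P N']
  end.

Definition net_fun2 (R : realType) (N : relu_net R 2 1) (x y : R) : R :=
  net_eval N (\col_(i < 2) (if i == ord0 then x else y)) ord0 ord0.

From HB Require Import structures.
From mathcomp Require Import all_boot all_order all_algebra.
From mathcomp Require Import reals.
From mathcomp Require Import ring lra zify.
Set Implicit Arguments. Unset Strict Implicit. Unset Printing Implicit Defensive.
Import Order.TTheory GRing.Theory Num.Theory.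
Local Open Scope ring_scope.

(* Since x y = |(x + y)/2|^2 - |(x - y)/2|^2, it suffices to run two copies of a
   ReLU approximation of t |-> t^2 on [0, 1] side by side and subtract their
   outputs; when x = 0 or y = 0 both copies receive the same input, so the
   output is exactly 0.  For the tent map g v = 2 v - 4 relu (v - 1/2),
     v - v^2 = g v / 4 + (g v - (g v)^2) / 4,
   so if F = t^2 + lam (v - v^2) then F - lam (g v) / 4 = t^2 + lam/4 (g v - (g v)^2):
   one pair of ReLU layers maps the channels (lam v, lam / 2, F) to the same
   channels for (lam / 4, g v).  Starting from lam = 1 and v = F = t, after r steps
   F exceeds t^2 by at most 4^-r / 4.  All weights are +-1/2; a weight 1 is
   obtained by duplicating a unit. *)

Section ReluMultiplication.
Variable R : realType.

Lemma ger0_relu (x : R) : 0 <= x -> relu x = x.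
Proof. by move=> x_ge0; apply/max_idPr. Qed.

Lemma ler0_relu (x : R) : x <= 0 -> relu x = 0.
Proof. by move=> x_le0; apply/max_idPl. Qed.

Lemma relu_add_reluN (x : R) : relu x + relu (- x) = `|x|.
Proof.
have [x_ge0 | x_lt0] := lerP 0 x.
  by rewrite ger0_relu // ler0_relu ?ger0_norm ?addr0 // oppr_le0.
by rewrite ler0_relu ?ger0_relu ?ltr0_norm ?add0r ?oppr_ge0 // ltW.
Qed.

Lemma relu_pmul (a x : R) : 0 <= a -> relu (a * x) = a * relu x.
Proof.
move=> a_ge0; have [x_ge0 | x_lt0] := lerP 0 x.
  by rewrite !ger0_relu // mulr_ge0.
by rewrite !ler0_relu ?mulr0 // ?mulr_ge0_le0 // ltW.
Qed.

Lemma relu_complementary (x : R) : relu x * (relu x - x) = 0.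
Proof.
have [x_ge0 | x_lt0] := lerP 0 x; first by rewrite ger0_relu // subrr mulr0.
by rewrite ler0_relu ?mul0r // ltW.
Qed.

Definition relu_layer p q (W : 'M[R]_(p, q)) (b : 'cV[R]_p) (v : 'cV[R]_q) :
  'cV[R]_p := map_mx (@relu R) (W *m v + b).

Lemma net_eval_Hidden n k m (W : 'M[R]_(k, n)) b (N : relu_net R k m) v :
  net_eval (Hidden W b N) v = net_eval N (relu_layer W b v).
Proof. by []. Qed.

Lemma relu_layer_col_mx p1 p2 q (W1 : 'M_(p1, q)) (W2 : 'M_(p2, q)) b1 b2 v :
  relu_layer (col_mx W1 W2) (col_mx b1 b2) v =
  col_mx (relu_layer W1 b1 v) (relu_layer W2 b2 v).
Proof. by rewrite /relu_layer mul_col_mx add_col_mx map_col_mx. Qed.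

Lemma relu_layer_block_diag p1 p2 q1 q2 (W1 : 'M_(p1, q1)) (W2 : 'M_(p2, q2)) v1 v2 :
  relu_layer (block_mx W1 0 0 W2) 0 (col_mx v1 v2) =
  col_mx (relu_layer W1 0 v1) (relu_layer W2 0 v2).
Proof. by rewrite /relu_layer mul_block_col !mul0mx !addr0 add0r map_col_mx. Qed.

Definition col_seq n (l : seq R) : 'cV[R]_n := \col_(i < n) l`_i.

(* The table [s] lists the weights row by row in units of 1/2; entries outside
   the table are 0. *)
Definition half_mx p q (s : seq (seq int)) : 'M[R]_(p, q) :=
  \matrix_(i, j) ((nth 0 (nth [::] s i) j)%:~R / 2).

Fixpoint half_dot (c : seq int) (l : seq R) : R :=
  if (c, l) is (a :: c', x :: l') then a%:~R / 2 * x + half_dot c' l' else 0.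

Lemma nth_map_dflt (T : Type) (x0 : T) (f : T -> R) s i :
  f x0 = 0 -> (map f s)`_i = f (nth x0 s i).
Proof.
move=> f0; have [i_lt | i_ge] := ltnP i (size s); first exact: nth_map.
by rewrite !nth_default ?size_map.
Qed.
Arguments nth_map_dflt {T} x0 [f s i].

Lemma sum_half_dot q c l : size l = q ->
  \sum_(j < q) (nth 0 c j)%:~R / 2 * l`_j = half_dot c l.
Proof.
elim: l q c => [|x l IHl] q c <-; first by rewrite big_ord0; case: c.
rewrite big_ord_recl; under eq_bigr do rewrite lift0.
case: c => [|a c]; last by rewrite /= (IHl _ c).
by rewrite big1 /= => [|j _]; rewrite ?mulr0z ?mul0r ?addr0.
Qed.

Lemma map_col_seq p (f : R -> R) l :
  f 0 = 0 -> map_mx f (col_seq p l) = col_seq p (map f l).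
Proof. by move=> f0; apply/matrixP => i j; rewrite !mxE (nth_map_dflt 0 f0). Qed.

Lemma add_col_seq p l1 l2 : size l1 = size l2 ->
  col_seq p l1 + col_seq p l2 = col_seq p [seq z.1 + z.2 | z <- zip l1 l2].
Proof.
move=> eq_size; apply/matrixP => i j; rewrite !mxE.
by rewrite (nth_map_dflt (0, 0)) ?addr0 // nth_zip.
Qed.

Lemma mul_half_mx_col_seq p q s l : size l = q ->
  half_mx p q s *m col_seq q l = col_seq p [seq half_dot c l | c <- s].
Proof.
move=> size_l; apply/matrixP => i j; rewrite !mxE (nth_map_dflt [::]) //.
by rewrite -(sum_half_dot _ size_l); apply: eq_bigr => k _; rewrite !mxE.
Qed.

Lemma half_mx_col_seq p s :
  half_mx p 1 s = col_seq p [seq (head 0 c)%:~R / 2 | c <- s].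
Proof. by apply/matrixP => i j; rewrite !mxE ord1 (nth_map_dflt [::]) ?mul0r. Qed.

Lemma relu_layer_half_mx p q s l : size l = q ->
  relu_layer (half_mx p q s) 0 (col_seq q l) =
  col_seq p [seq relu (half_dot c l) | c <- s].
Proof.
move=> size_l; rewrite /relu_layer addr0 mul_half_mx_col_seq // map_col_seq.
  by rewrite -map_comp.
exact: ler0_relu.
Qed.

Definition sign_table (s : seq (seq int)) : bool :=
  all (all (fun c => c \in [:: -1; 0; 1])) s.

Lemma half_weight0 : half_weight (0 : R).
Proof. by left. Qed.

Lemma half_weightN (w : R) : half_weight w -> half_weight (- w).
Proof. by move=> [->|[->|->]]; rewrite /half_weight ?oppr0 ?opprK; tauto. Qed.

Lemma half_mx_weights p q s : sign_table s -> mx_all (@half_weight R) (half_mx p q s).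
Proof.
move=> table_s i j; rewrite mxE.
have sign_row : all (fun c => c \in [:: -1; 0; 1]) (nth [::] s i).
  have [i_lt | i_ge] := ltnP i (size s); last by rewrite nth_default.
  exact: (allP table_s) _ (mem_nth _ i_lt).
have : nth 0 (nth [::] s i) j \in [:: -1; 0; 1].
  have [j_lt | j_ge] := ltnP j (size (nth [::] s i)); last by rewrite nth_default.
  exact: (allP sign_row) _ (mem_nth _ j_lt).
by rewrite !inE => /or3P[] /eqP ->; rewrite /half_weight; lra.
Qed.

Lemma mx_all0 (P : R -> Prop) p q : P 0 -> mx_all P (0 : 'M_(p, q)).
Proof. by move=> P0 i j; rewrite mxE. Qed.

Lemma mx_allN (P : R -> Prop) p q (A : 'M_(p, q)) :
  (forall w, P w -> P (- w)) -> mx_all P A -> mx_all P (- A).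
Proof. by move=> PN PA i j; rewrite mxE; apply: PN. Qed.

Lemma mx_all_row_mx (P : R -> Prop) p q1 q2 (A1 : 'M_(p, q1)) (A2 : 'M_(p, q2)) :
  mx_all P A1 -> mx_all P A2 -> mx_all P (row_mx A1 A2).
Proof.
by move=> PA1 PA2 i j; rewrite -(splitK j); case: split => k; rewrite ?row_mxEl ?row_mxEr.
Qed.

Lemma mx_all_col_mx (P : R -> Prop) p1 p2 q (A1 : 'M_(p1, q)) (A2 : 'M_(p2, q)) :
  mx_all P A1 -> mx_all P A2 -> mx_all P (col_mx A1 A2).
Proof.
by move=> PA1 PA2 i j; rewrite -(splitK i); case: split => k; rewrite ?col_mxEu ?col_mxEd.
Qed.

Lemma mx_all_block_diag (P : R -> Prop) p1 p2 q1 q2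
    (A1 : 'M_(p1, q1)) (A2 : 'M_(p2, q2)) :
  P 0 -> mx_all P A1 -> mx_all P A2 -> mx_all P (block_mx A1 0 0 A2).
Proof.
by move=> P0 PA1 PA2; apply: mx_all_col_mx; apply: mx_all_row_mx => //; apply: mx_all0.
Qed.

Lemma mx_nnz_le p q (A : 'M[R]_(p, q)) : (mx_nnz A <= p * q)%N.
Proof. by rewrite /mx_nnz (leq_trans (max_card _)) // card_prod !card_ord. Qed.

(* On [0, 1] this is the hat function min (2 v) (2 - 2 v). *)
Definition tent (v : R) : R := 2 * v - 4 * relu (v - 2^-1).

Lemma tent_itv (v : R) : 0 <= v <= 1 -> 0 <= tent v <= 1.
Proof.
move=> /andP[v_ge0 v_le1]; rewrite /tent.
have [v_le | v_gt] := lerP v 2^-1.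
  by rewrite ler0_relu; [apply/andP; split; lra | lra].
by rewrite ger0_relu; [apply/andP; split; lra | lra].
Qed.

Lemma iter_tent_itv m (v : R) : 0 <= v <= 1 -> 0 <= iter m tent v <= 1.
Proof. by move=> v_itv; elim: m => [|m IHm] //=; apply: tent_itv. Qed.

Lemma tent_residue (v : R) : (tent v - tent v ^+ 2) / 4 = v - v ^+ 2 - tent v / 4.
Proof.
apply/eqP; rewrite -subr_eq0 /tent; apply/eqP.
set r := relu _; transitivity (- 4 * (r * (r - (v - 2^-1)))); first by field.
by rewrite relu_complementary mulr0.
Qed.

Lemma sub_sqr_itv (v : R) : 0 <= v <= 1 -> 0 <= v - v ^+ 2 <= 4^-1.
Proof.
move=> /andP[v_ge0 v_le1]; have := sqr_ge0 (v - 2^-1).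
by rewrite !expr2 => sq_ge0; apply/andP; split; nra.
Qed.

Definition sq_value (lam v T : R) : R := T + lam * (v - v ^+ 2).

Lemma sq_value_ge0 (lam v T : R) :
  0 <= lam -> 0 <= v <= 1 -> 0 <= T -> 0 <= sq_value lam v T.
Proof.
move=> lam_ge0 /sub_sqr_itv /andP[res_ge0 _] T_ge0.
by rewrite addr_ge0 // mulr_ge0.
Qed.

(* The value is stored twice so that it can be passed on with total weight 1. *)
Definition sq_state (lam v T : R) : 'cV[R]_4 :=
  col_seq 4 [:: lam * v; lam / 2; sq_value lam v T; sq_value lam v T].

Definition tent_pieces_mx : 'M[R]_(9, 4) := half_mx 9 4
  [:: [:: 1; 0; 0; 0]; [:: 1; 0; 0; 0];
      [:: 1; -1; 0; 0]; [:: 1; -1; 0; 0]; [:: 1; -1; 0; 0]; [:: 1; -1; 0; 0];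
      [:: 0; 1; 0; 0];
      [:: 0; 0; 1; 1]; [:: 0; 0; 1; 1]].

Definition tent_combine_mx : 'M[R]_(4, 9) := half_mx 4 9
  [:: [:: 1; 1; -1; -1; -1; -1; 0; 0; 0];
      [:: 0; 0; 0; 0; 0; 0; 1; 0; 0];
      [:: -1; -1; 1; 1; 1; 1; 0; 1; 1];
      [:: -1; -1; 1; 1; 1; 1; 0; 1; 1]].

Lemma tent_pieces_layer lam v T : 0 <= lam -> 0 <= v -> 0 <= sq_value lam v T ->
  relu_layer tent_pieces_mx 0 (sq_state lam v T) =
  col_seq 9 (let a := lam * v / 2 in let b := lam / 2 * relu (v - 2^-1) in
             let d := sq_value lam v T in [:: a; a; b; b; b; b; lam / 4; d; d]).
Proof.
move=> lam_ge0 v_ge0 d_ge0; have lamv_ge0 := mulr_ge0 lam_ge0 v_ge0.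
rewrite relu_layer_half_mx //=.
have b_eq E : E = lam / 2 * (v - 2^-1) -> relu E = lam / 2 * relu (v - 2^-1).
  by move->; rewrite relu_pmul // divr_ge0.
congr (col_seq 9 [:: _; _; _; _; _; _; _; _; _]).
all: try by apply: b_eq; lra.
all: by rewrite ger0_relu; lra.
Qed.

Lemma tent_combine_layer (a b c d : R) :
  relu_layer tent_combine_mx 0 (col_seq 9 [:: a; a; b; b; b; b; c; d; d]) =
  col_seq 4 [:: relu (a - 2 * b); relu (c / 2);
                relu (d - (a - 2 * b)); relu (d - (a - 2 * b))].
Proof.
rewrite relu_layer_half_mx //=.
by congr (col_seq 4 [:: relu _; relu _; relu _; relu _]); lra.
Qed.

Lemma sq_step (lam v T : R) : 0 <= lam -> 0 <= v <= 1 -> 0 <= T ->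
  relu_layer tent_combine_mx 0 (relu_layer tent_pieces_mx 0 (sq_state lam v T)) =
  sq_state (lam / 4) (tent v) T.
Proof.
move=> lam_ge0 v_itv T_ge0; have /andP[v_ge0 _] := v_itv.
have /andP[tent_ge0 _] := tent_itv v_itv.
have lam4_ge0 : 0 <= lam / 4 by rewrite divr_ge0.
rewrite tent_pieces_layer ?sq_value_ge0 // tent_combine_layer /=.
have tent_piece : lam * v / 2 - 2 * (lam / 2 * relu (v - 2^-1)) = lam / 4 * tent v.
  by rewrite /tent; lra.
have sq_value_tent :
    sq_value lam v T - lam / 4 * tent v = sq_value (lam / 4) (tent v) T.
  rewrite /sq_value.
  have -> : lam / 4 * (tent v - tent v ^+ 2) = lam * ((tent v - tent v ^+ 2) / 4).
    by ring.
  by rewrite tent_residue; ring.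
rewrite tent_piece sq_value_tent !ger0_relu //.
all: by rewrite ?mulr_ge0 ?divr_ge0 ?sq_value_ge0 ?tent_itv ?invr_ge0 ?ler0n.
Qed.

Definition readout_mx : 'M[R]_(1, 4) := half_mx 1 4 [:: [:: 0; 0; 1; 1]].

Lemma readout_sq_state (lam v T : R) :
  readout_mx *m sq_state lam v T = col_seq 1 [:: sq_value lam v T].
Proof. by rewrite mul_half_mx_col_seq //=; congr (col_seq 1 [:: _]); lra. Qed.

Fixpoint tent_net m : relu_net R (4 + 4) 1 :=
  if m is m'.+1 then
    Hidden (block_mx tent_pieces_mx 0 0 tent_pieces_mx) 0
      (Hidden (block_mx tent_combine_mx 0 0 tent_combine_mx) 0 (tent_net m'))
  else Out (row_mx readout_mx (- readout_mx)) 0.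

Lemma tent_net_eval_twin m (s : 'cV[R]_4) : net_eval (tent_net m) (col_mx s s) = 0.
Proof.
elim: m s => [|m IHm] s; first by rewrite /= mul_row_col mulNmx subrr addr0.
by cbn [tent_net]; rewrite !net_eval_Hidden !relu_layer_block_diag IHm.
Qed.

Lemma tent_net_eval m (lam v T lam' v' T' : R) :
  0 <= lam -> 0 <= v <= 1 -> 0 <= T -> 0 <= lam' -> 0 <= v' <= 1 -> 0 <= T' ->
  net_eval (tent_net m) (col_mx (sq_state lam v T) (sq_state lam' v' T')) =
  col_seq 1 [:: sq_value (lam * 4^-1 ^+ m) (iter m tent v) T -
                sq_value (lam' * 4^-1 ^+ m) (iter m tent v') T'].
Proof.
elim: m lam v lam' v' => [|m IHm] lam v lam' v'.
  move=> *; rewrite /= mul_row_col mulNmx !readout_sq_state !expr0 !mulr1 addr0.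
  by apply/matrixP => i j; rewrite !mxE ord1.
move=> lam_ge0 v_itv T_ge0 lam'_ge0 v'_itv T'_ge0.
have lam4_ge0 (a : R) : 0 <= a -> 0 <= a / 4 by move=> a_ge0; rewrite divr_ge0.
cbn [tent_net]; rewrite !net_eval_Hidden !relu_layer_block_diag !sq_step //.
by rewrite IHm ?lam4_ge0 ?tent_itv // !iterSr !exprS !mulrA.
Qed.

Definition abs_pieces_mx (s : int) : 'M[R]_(6, 2) := half_mx 6 2
  [:: [:: 1; s]; [:: 1; s]; [:: -1; - s]; [:: -1; - s]; [:: 0; 0]; [:: 0; 0]].

Definition abs_pieces_bias : 'cV[R]_6 :=
  half_mx 6 1 [:: [:: 0]; [:: 0]; [:: 0]; [:: 0]; [:: 1]; [:: 1]].

Definition abs_combine_mx : 'M[R]_(4, 6) := half_mx 4 6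
  [:: [:: 1; 1; 1; 1; 0; 0]; [:: 0; 0; 0; 0; 1; 1];
      [:: 1; 1; 1; 1; 0; 0]; [:: 1; 1; 1; 1; 0; 0]].

Lemma abs_pieces_layer (s : int) (x y : R) :
  relu_layer (abs_pieces_mx s) abs_pieces_bias (col_seq 2 [:: x; y]) =
  col_seq 6 (let u := (x + s%:~R * y) / 2 in
             [:: relu u; relu u; relu (- u); relu (- u); 2^-1; 2^-1]).
Proof.
rewrite /relu_layer mul_half_mx_col_seq // /abs_pieces_bias half_mx_col_seq.
rewrite add_col_seq // map_col_seq /=; last exact: ler0_relu.
have half_ge0 : (0 : R) <= 2^-1 by rewrite invr_ge0 ler0n.
congr (col_seq 6 [:: relu _; relu _; relu _; relu _; _; _]); rewrite ?mulrNz; try lra.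
all: by rewrite ger0_relu; lra.
Qed.

Lemma abs_combine_layer (a b c : R) :
  relu_layer abs_combine_mx 0 (col_seq 6 [:: a; a; b; b; c; c]) =
  col_seq 4 [:: relu (a + b); relu c; relu (a + b); relu (a + b)].
Proof.
rewrite relu_layer_half_mx //=.
by congr (col_seq 4 [:: relu _; relu _; relu _; relu _]); lra.
Qed.

Definition sq_init (t : R) : 'cV[R]_4 := sq_state 1 t (t ^+ 2).

Lemma abs_front_layers (s : int) (x y : R) :
  relu_layer abs_combine_mx 0
    (relu_layer (abs_pieces_mx s) abs_pieces_bias (col_seq 2 [:: x; y])) =
  sq_init `|(x + s%:~R * y) / 2|.
Proof.
rewrite abs_pieces_layer /= abs_combine_layer relu_add_reluN.
have half_ge0 : (0 : R) <= 2^-1 by rewrite invr_ge0 ler0n.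
rewrite !ger0_relu ?normr_ge0 //= /sq_init /sq_state /sq_value.
by congr (col_seq 4 [:: _; _; _; _]); ring.
Qed.

Definition mul_net r : relu_net R 2 1 :=
  Hidden (col_mx (abs_pieces_mx 1) (abs_pieces_mx (-1)))
    (col_mx abs_pieces_bias abs_pieces_bias)
    (Hidden (block_mx abs_combine_mx 0 0 abs_combine_mx) 0 (tent_net r)).

Lemma net_fun2_mul_net r (x y : R) :
  net_fun2 (mul_net r) x y =
  net_eval (tent_net r) (col_mx (sq_init `|(x + y) / 2|) (sq_init `|(x - y) / 2|))
    ord0 ord0.
Proof.
rewrite /net_fun2.
have -> : \col_(i < 2) (if i == ord0 then x else y) = col_seq 2 [:: x; y].
  by apply/matrixP => i j; rewrite !mxE; case: i => [[|[|i]] ?].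
rewrite net_eval_Hidden relu_layer_col_mx net_eval_Hidden relu_layer_block_diag.
by rewrite !abs_front_layers mulr1z mulrN1z mul1r mulN1r.
Qed.

Lemma mul_net_zero r (x y : R) : x = 0 \/ y = 0 -> net_fun2 (mul_net r) x y = 0.
Proof.
move=> xy0; rewrite net_fun2_mul_net.
have -> : `|(x - y) / 2| = `|(x + y) / 2|.
  by case: xy0 => ->; rewrite ?add0r ?sub0r ?subr0 ?addr0 ?mulNr ?normrN.
by rewrite tent_net_eval_twin mxE.
Qed.

Definition sq_approx m (t : R) : R := sq_value (4^-1 ^+ m) (iter m tent t) (t ^+ 2).

Lemma sq_approx_err m (t : R) :
  0 <= t <= 1 -> 0 <= sq_approx m t - t ^+ 2 <= 4^-1 ^+ m.+1.
Proof.
move=> /(iter_tent_itv m) /sub_sqr_itv /andP[res_ge0 res_le].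
have lam_ge0 : (0 : R) <= 4^-1 ^+ m by rewrite exprn_ge0 // invr_ge0 ler0n.
rewrite /sq_approx /sq_value addrAC subrr add0r [_ ^+ m.+1]exprSr.
by rewrite mulr_ge0 ?ler_wpM2l.
Qed.

Lemma expr4V n : (4^-1 : R) ^+ n = 2 ^- (2 * n).
Proof. by rewrite exprVn exprM expr2 -natrM. Qed.

Lemma mul_net_err r (x y : R) : -1 <= x <= 1 -> -1 <= y <= 1 ->
  `|net_fun2 (mul_net r) x y - x * y| <= 2 ^- (2 * r.+1).
Proof.
move=> /andP[x_ge x_le] /andP[y_ge y_le].
have half_le1 (u : R) : `|u| <= 2 -> `|u / 2| <= 1.
  by move=> u_le; rewrite normrM [`|2^-1|]ger0_norm ?invr_ge0 ?ler0n //; lra.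
have plus_le1 : `|(x + y) / 2| <= 1.
  by apply: half_le1; rewrite ler_norml; apply/andP; split; lra.
have minus_le1 : `|(x - y) / 2| <= 1.
  by apply: half_le1; rewrite ler_norml; apply/andP; split; lra.
have err_itv (u : R) :
    `|u| <= 1 -> 0 <= sq_approx r `|u| - `|u| ^+ 2 <= 4^-1 ^+ r.+1.
  by move=> u_le1; apply: sq_approx_err; rewrite normr_ge0.
have xy_eq : x * y = `|(x + y) / 2| ^+ 2 - `|(x - y) / 2| ^+ 2.
  by rewrite !(real_normK (num_real _)); field.
rewrite net_fun2_mul_net tent_net_eval ?normr_ge0 ?exprn_ge0 ?plus_le1 ?minus_le1 //.
rewrite mxE /= !mul1r -/(sq_approx r _) -/(sq_approx r _) xy_eq -expr4V ler_norml.
have /andP[? ?] := err_itv _ plus_le1; have /andP[? ?] := err_itv _ minus_le1.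
by apply/andP; split; lra.
Qed.

Lemma tent_net_weights m : net_weights_in (@half_weight R) (tent_net m).
Proof.
elim: m => [|m IHm] /=.
- split; last exact: mx_all0 half_weight0.
  by apply: mx_all_row_mx; last apply: mx_allN half_weightN _; apply: half_mx_weights.
- split; last split=> //.
  all: try exact: mx_all0 half_weight0.
  all: by apply: mx_all_block_diag half_weight0 _ _; apply: half_mx_weights.
Qed.

Lemma mul_net_weights r : net_weights_in (@half_weight R) (mul_net r).
Proof.
split; last split.
- by apply: mx_all_col_mx; apply: half_mx_weights.
- by apply: mx_all_col_mx; apply: half_mx_weights.
- by apply: mx_all_block_diag half_weight0 _ _; apply: half_mx_weights.
- exact: mx_all0 half_weight0.
- exact: tent_net_weights.
Qed.

Lemma tent_net_depth m : net_depth (tent_net m) = (2 * m + 2)%N.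
Proof. by elim: m => [|m /= ->] //; lia. Qed.

Lemma mul_net_depth r : net_depth (mul_net r) = (2 * r + 4)%N.
Proof. by rewrite /= tent_net_depth; lia. Qed.

Lemma tent_net_width m : (net_width (tent_net m) <= 18)%N.
Proof. by elim: m => [|m IHm] //=; rewrite !geq_max IHm. Qed.

Lemma mul_net_width r : (net_width (mul_net r) <= 18)%N.
Proof. by rewrite /= !geq_max tent_net_width. Qed.

Lemma tent_net_nweights m : (net_nweights (tent_net m) <= 9 + 314 * m)%N.
Proof.
elim: m => [|m IHm] /=.
  have := mx_nnz_le (row_mx readout_mx (- readout_mx)).
  by have := mx_nnz_le (0 : 'cV[R]_1); lia.
have := mx_nnz_le (block_mx tent_pieces_mx 0 0 tent_pieces_mx).
have := mx_nnz_le (block_mx tent_combine_mx 0 0 tent_combine_mx).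
have := mx_nnz_le (0 : 'cV[R]_(9 + 9)); have := mx_nnz_le (0 : 'cV[R]_(4 + 4)).
lia.
Qed.

Lemma mul_net_nweights r : (net_nweights (mul_net r) <= 149 + 314 * r)%N.
Proof.
rewrite /=; have := tent_net_nweights r.
have := mx_nnz_le (col_mx (abs_pieces_mx 1) (abs_pieces_mx (-1))).
have := mx_nnz_le (col_mx abs_pieces_bias abs_pieces_bias).
have := mx_nnz_le (block_mx abs_combine_mx 0 0 abs_combine_mx).
have := mx_nnz_le (0 : 'cV[R]_(4 + 4)).
lia.
Qed.

End ReluMultiplication.

Theorem proposition2 (R : realType) :
  exists C : nat, forall r : nat, (0 < r)%N ->
  exists N : relu_net R 2 1,
    [/\ net_weights_in (@half_weight R) N,
        (forall x y : R, x = 0 \/ y = 0 -> net_fun2 N x y = 0),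
        (forall x y : R, -1 <= x <= 1 -> -1 <= y <= 1 ->
           `|net_fun2 N x y - x * y| <= 6 * (2 ^- (2 * r.+1)))
      & [/\ (net_depth N <= C * r)%N,
            (net_width N <= C)%N &
            (net_nweights N <= C * r)%N]].
Proof.
exists 463%N => r r_gt0; exists (mul_net R r); split.
- exact: mul_net_weights.
- exact: mul_net_zero.
- move=> x y x_itv y_itv; apply: le_trans (mul_net_err r x_itv y_itv) _.
  have : (0 : R) <= 2 ^- (2 * r.+1) by rewrite invr_ge0 exprn_ge0 ?ler0n.
  lra.
- split; first by rewrite mul_net_depth; lia.
  + exact: leq_trans (mul_net_width R r) _.
  + by have := mul_net_nweights R r; lia.
Qed.
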